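(* For $n,m\in\mathbb{N}_0$, $$\int_0^{\pi/2}x^n\sin^{2m}(x)\,dx=\frac{1}{4^m}\Big(\frac{\pi}{2}\Big)^n\Bigg(\frac{\pi\binom{2m}{m}}{2(n+1)}-n!\sum_{k=1}^{\infty}\binom{2m}{m+k}\bigg(\sum_{j=1}^{\lfloor (n+1)/2\rfloor}\frac{(-1)^j}{\pi^{2j-1}k^{2j}(n+1-2j)!}-\delta_{\lfloor \frac{n+1}{2}\rfloor,\frac{n+1}{2}}\frac{(-1)^k(-1)^{\lfloor (n+1)/2\rfloor}}{\pi^n k^{n+1}}\bigg)\Bigg).$$
   Context: $\delta_{a,b}$ is the Kronecker delta, so $\delta_{\lfloor \frac{n+1}{2}\rfloor,\frac{n+1}{2}}$ is $1$ if $n$ is odd and $0$ if $n$ is even. $\binom{2m}{m+k}=0$ for integers $k>m$. An empty sum is $0$. *)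

From Stdlib Require Import Reals Factorial.
From Coquelicot Require Import Coquelicot.
Open Scope R_scope.

Definition binom (n k : nat) : R := if Nat.leb k n then Binomial.C n k else 0.

(* Kronecker delta  delta_{floor((n+1)/2), (n+1)/2}: 1 iff (n+1)/2 is an integer. *)
Definition delta_half (n : nat) : R := if Nat.even (n + 1) then 1 else 0.

Definition inner_term (n k : nat) : R :=
  sum_n_m (fun j : nat =>
      (-1) ^ j / (PI ^ (2 * j - 1) * INR k ^ (2 * j) * INR (Factorial.fact (n + 1 - 2 * j))))
    1 (Nat.div2 (n + 1))
  - delta_half n * ((-1) ^ k * (-1) ^ (Nat.div2 (n + 1)))
      / (PI ^ n * INR k ^ (n + 1)).

Definition summand (n m k : nat) : R := binom (2 * m) (m + k) * inner_term n k.

From Stdlib Require Import Reals Factorial Lia Lra.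
From Coquelicot Require Import Coquelicot.
Open Scope R_scope.

(* Since sin x = cos (PI/2 - x), the expansion
     4^m cos^(2m) y = C(2m,m) + 2 sum_(k>=1) C(2m,m+k) cos (2ky),
   proved by induction on m from 4 cos^2 y = 2 + 2 cos 2y and Pascal's rule applied twice,
   reduces the integral to the moments M_k(n) = int_0^(PI/2) x^n cos (2k (PI/2 - x)) dx.
   Two integrations by parts give 4k^2 M_k(n+2) = (n+2) ((PI/2)^(n+1) - (n+1) M_k(n)),
   with M_k(0) = 0 and 4k^2 M_k(1) = 1 - (-1)^k.  The inner bracket of the k-th summand
   obeys the matching recurrence, whence M_k(n) = - (PI/2)^n n! [bracket] / 2.  The series
   is a finite sum because C(2m, m+k) = 0 for k > m. *)

Lemma binom_out n k : (n < k)%nat -> binom n k = 0.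
Proof. intros H; unfold binom; now rewrite (proj2 (Nat.leb_gt k n) H). Qed.

Lemma binom_pascal n k : binom (S n) (S k) = binom n k + binom n (S k).
Proof.
destruct (Nat.lt_total k n) as [H|[H|H]].
- unfold binom. rewrite !(proj2 (Nat.leb_le _ _)) by lia. now rewrite pascal.
- subst. unfold binom. rewrite !(proj2 (Nat.leb_le _ _)) by lia.
  rewrite (proj2 (Nat.leb_gt _ _)) by lia. rewrite !C_n_n; lra.
- rewrite !binom_out by lia. lra.
Qed.

Lemma binom_sym n k : (k <= n)%nat -> binom n k = binom n (n - k).
Proof.
intros H; unfold binom. rewrite !(proj2 (Nat.leb_le _ _)) by lia. now apply pascal_step1.
Qed.

Lemma binom_central_S m k :
  binom (2 * S m) (S m + S k)
  = binom (2 * m) (m + k) + 2 * binom (2 * m) (m + S k) + binom (2 * m) (m + S (S k)).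
Proof.
replace (2 * S m)%nat with (S (S (2 * m))) by lia.
replace (S m + S k)%nat with (S (S (m + k))) by lia.
rewrite !binom_pascal. replace (S (m + k)) with (m + S k)%nat by lia.
replace (S (m + S k)) with (m + S (S k))%nat by lia. lra.
Qed.

Lemma binom_central_S0 m :
  binom (2 * S m) (S m + 0) = 2 * binom (2 * m) (m + 0) + 2 * binom (2 * m) (m + 1).
Proof.
rewrite !Nat.add_0_r. destruct m as [|m].
- unfold binom, Binomial.C; simpl. field.
- replace (2 * S (S m))%nat with (S (S (2 * S m))) by lia.
  rewrite (binom_pascal (S (2 * S m)) (S m)), (binom_pascal (2 * S m) m),
    (binom_pascal (2 * S m) (S m)), (binom_sym (2 * S m) m) by lia.
  replace (2 * S m - m)%nat with (S m + 1)%nat by lia.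
  replace (S (S m)) with (S m + 1)%nat by lia. lra.
Qed.

Lemma sum_f_R0_stable (a : nat -> R) N M :
  (N <= M)%nat -> (forall k, (N < k)%nat -> a k = 0) -> sum_f_R0 a M = sum_f_R0 a N.
Proof.
intros HNM Ha; induction HNM as [|M HNM IH]; [reflexivity|].
rewrite tech5, IH, (Ha (S M)) by lia. apply Rplus_0_r.
Qed.

Lemma Series_finite (a : nat -> R) N :
  (forall k, (N < k)%nat -> a k = 0) -> Series a = sum_f_R0 a N.
Proof.
intros Ha; unfold Series.
rewrite (Lim_seq_ext_loc _ (fun _ => sum_f_R0 a N)), Lim_seq_const; [reflexivity|].
exists N; intros M HM. rewrite sum_n_Reals. now apply sum_f_R0_stable.
Qed.

(* [c 0 + 2 sum_(k=1..N+1) c k cos (2ky)]: [sum_f_R0 f N] has the N+1 terms [f 0 .. f N]. *)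
Definition cos_poly (c : nat -> R) (N : nat) (y : R) : R :=
  c 0%nat + 2 * sum_f_R0 (fun k => c (S k) * cos (2 * INR (S k) * y)) N.

Lemma cos_mul_cos_2 (j : nat) (y : R) :
  2 * cos (2 * y) * cos (2 * INR (S j) * y)
  = cos (2 * INR j * y) + cos (2 * INR (S (S j)) * y).
Proof.
rewrite !S_INR.
replace (2 * (INR j + 1 + 1) * y) with (2 * (INR j + 1) * y + 2 * y) by ring.
replace (2 * INR j * y) with (2 * (INR j + 1) * y - 2 * y) by ring.
rewrite cos_plus, cos_minus. ring.
Qed.

Lemma cos_sqr_mul_cos_poly (c c' : nat -> R) (N : nat) (y : R) :
  (forall k, (N < k)%nat -> c k = 0) ->
  c' 0%nat = 2 * c 0%nat + 2 * c 1%nat ->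
  (forall k, c' (S k) = c k + 2 * c (S k) + c (S (S k))) ->
  4 * cos y ^ 2 * cos_poly c N y = cos_poly c' N y.
Proof.
intros Hc Hc'0 Hc'S.
set (T := fun j : nat => cos (2 * INR j * y)).
assert (T0 : T 0%nat = 1) by (unfold T; simpl INR; rewrite Rmult_0_r, Rmult_0_l; apply cos_0).
assert (T1 : T 1%nat = cos (2 * y)) by (unfold T; simpl INR; f_equal; ring).
assert (Hdown : sum_f_R0 (fun k => c (S k) * T k) N
                = c 1%nat + sum_f_R0 (fun k => c (S (S k)) * T (S k)) N).
{ rewrite <- (sum_f_R0_stable (fun k => c (S k) * T k) N (S N));
    [| lia | intros k Hk; rewrite Hc by lia; ring].
  rewrite (decomp_sum (fun k => c (S k) * T k) (S N)), T0 by lia. simpl pred. ring. }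
assert (Hup : sum_f_R0 (fun k => c (S k) * T (S (S k))) N
              = sum_f_R0 (fun k => c k * T (S k)) N - c 0%nat * T 1%nat).
{ rewrite <- (sum_f_R0_stable (fun k => c k * T (S k)) N (S N));
    [| lia | intros k Hk; rewrite Hc by lia; ring].
  rewrite (decomp_sum (fun k => c k * T (S k)) (S N)) by lia. simpl pred. ring. }
assert (Hprod : 2 * cos (2 * y) * sum_f_R0 (fun k => c (S k) * T (S k)) N
                = sum_f_R0 (fun k => c (S k) * T k) N
                  + sum_f_R0 (fun k => c (S k) * T (S (S k))) N).
{ rewrite scal_sum, <- plus_sum. apply sum_eq. intros k _.
  unfold T. rewrite <- Rmult_plus_distr_l, <- cos_mul_cos_2. ring. }
unfold cos_poly.
rewrite Hc'0, (sum_eq (fun k => c' (S k) * cos (2 * INR (S k) * y))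
  (fun k => c k * T (S k) + c (S k) * T (S k) * 2 + c (S (S k)) * T (S k)))
  by (intros k _; rewrite Hc'S; unfold T; ring).
rewrite !plus_sum, <- scal_sum.
replace (4 * cos y ^ 2) with (2 + 2 * cos (2 * y)) by (rewrite cos_2a_cos; ring).
rewrite T1 in Hup. rewrite Hdown, Hup in Hprod.
change (sum_f_R0 (fun k => c (S k) * cos (2 * INR (S k) * y)) N)
  with (sum_f_R0 (fun k => c (S k) * T (S k)) N).
set (s := sum_f_R0 (fun k => c (S k) * T (S k)) N) in *. nra.
Qed.

Lemma cos_pow_fourier m N y :
  (m <= S N)%nat -> 4 ^ m * cos y ^ (2 * m) = cos_poly (fun k => binom (2 * m) (m + k)) N y.
Proof.
induction m as [|m IH]; intros Hm.
- unfold cos_poly. rewrite (sum_eq _ (fun _ => 0)), sum_cte.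
  + unfold binom, Binomial.C. simpl. field.
  + intros k _. rewrite binom_out by lia. ring.
- replace (4 ^ S m * cos y ^ (2 * S m)) with (4 * cos y ^ 2 * (4 ^ m * cos y ^ (2 * m)))
    by (replace (2 * S m)%nat with (2 + 2 * m)%nat by lia; rewrite pow_add; simpl; ring).
  rewrite IH by lia. apply cos_sqr_mul_cos_poly.
  + intros k Hk. apply binom_out. lia.
  + apply binom_central_S0.
  + intros k. apply binom_central_S.
Qed.

Lemma RInt_pow_mul_by_parts (g h : R -> R) (l b : R) (n : nat) :
  (forall x, is_derive g x (l * h x)) -> (forall x, continuous h x) ->
  INR n * RInt (fun x => x ^ pred n * g x) 0 b + l * RInt (fun x => x ^ n * h x) 0 b
  = b ^ n * g b - 0 ^ n * g 0.
Proof.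
intros Hg Hh.
assert (Hcg : forall x, continuous g x)
  by (intros x; apply (ex_derive_continuous (V := R_NormedModule)); eexists; apply Hg).
assert (Hpow : forall k x, continuous (fun y => y ^ k) x)
  by (intros k x; apply (ex_derive_continuous (V := R_NormedModule)); auto_derive; auto).
transitivity (RInt (fun x => INR n * x ^ pred n * g x + x ^ n * (l * h x)) 0 b).
- symmetry. apply is_RInt_unique.
  apply (is_RInt_ext (fun x => INR n * (x ^ pred n * g x) + l * (x ^ n * h x)));
    [intros x _; cbn; ring|].
  apply (is_RInt_plus (V := R_NormedModule)); apply (is_RInt_scal (V := R_NormedModule));
    apply (RInt_correct (V := R_CompleteNormedModule));
    apply (ex_RInt_continuous (V := R_CompleteNormedModule));
    intros; apply (continuous_mult (K := R_AbsRing)); auto.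
- apply is_RInt_unique.
  apply (is_RInt_scal_derive (V := R_CompleteNormedModule)
           (fun x => x ^ n) g (fun x => INR n * x ^ pred n) (fun x => l * h x));
    intros x _.
  + auto_derive; auto. cbn; ring.
  + apply Hg.
  + apply (ex_derive_continuous (V := R_NormedModule)). auto_derive. auto.
  + apply (continuous_mult (K := R_AbsRing)); [apply continuous_const | apply Hh].
Qed.

Lemma sin_nat_mult_PI (k : nat) : sin (INR k * PI) = 0.
Proof. apply sin_eq_0_1. exists (Z.of_nat k). now rewrite <- INR_IZR_INZ. Qed.

Lemma cos_nat_mult_PI (k : nat) : cos (INR k * PI) = (-1) ^ k.
Proof.
induction k as [|k IH]; [simpl; rewrite Rmult_0_l; apply cos_0|].
rewrite S_INR, Rmult_plus_distr_r, Rmult_1_l, neg_cos, IH. simpl. ring.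
Qed.

Definition cos_moment (K n : nat) : R :=
  RInt (fun x => x ^ n * cos (2 * INR K * (PI / 2 - x))) 0 (PI / 2).

Definition sin_moment (K n : nat) : R :=
  RInt (fun x => x ^ n * sin (2 * INR K * (PI / 2 - x))) 0 (PI / 2).

Lemma cos_moment_by_parts K n : INR n * sin_moment K (pred n) = 2 * INR K * cos_moment K n.
Proof.
unfold sin_moment, cos_moment.
cut (INR n * RInt (fun x => x ^ pred n * sin (2 * INR K * (PI / 2 - x))) 0 (PI / 2)
     + - (2 * INR K) * RInt (fun x => x ^ n * cos (2 * INR K * (PI / 2 - x))) 0 (PI / 2) = 0);
  [lra|].
rewrite (RInt_pow_mul_by_parts (fun x => sin (2 * INR K * (PI / 2 - x)))
  (fun x => cos (2 * INR K * (PI / 2 - x))) (- (2 * INR K)) (PI / 2) n).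
- rewrite Rminus_diag, Rmult_0_r, sin_0, Rminus_0_r.
  replace (2 * INR K * (PI / 2)) with (INR K * PI) by field.
  rewrite sin_nat_mult_PI. ring.
- intros x. auto_derive; auto. unfold Rminus. ring.
- intros x. apply (ex_derive_continuous (V := R_NormedModule)). auto_derive. auto.
Qed.

Lemma sin_moment_by_parts K n :
  INR n * cos_moment K (pred n) + 2 * INR K * sin_moment K n = (PI / 2) ^ n - 0 ^ n * (-1) ^ K.
Proof.
unfold sin_moment, cos_moment.
rewrite (RInt_pow_mul_by_parts (fun x => cos (2 * INR K * (PI / 2 - x)))
  (fun x => sin (2 * INR K * (PI / 2 - x))) (2 * INR K) (PI / 2) n).
- rewrite Rminus_diag, Rmult_0_r, cos_0, Rminus_0_r.
  replace (2 * INR K * (PI / 2)) with (INR K * PI) by field.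
  rewrite cos_nat_mult_PI. ring.
- intros x. auto_derive; auto. unfold Rminus. ring.
- intros x. apply (ex_derive_continuous (V := R_NormedModule)). auto_derive. auto.
Qed.

Lemma cos_moment_0 K : (0 < K)%nat -> cos_moment K 0 = 0.
Proof.
intros HK. assert (HK' : INR K <> 0) by (apply not_0_INR; lia).
assert (H := cos_moment_by_parts K 0). simpl INR in H.
apply Rmult_eq_reg_l with (2 * INR K); lra.
Qed.

Lemma cos_moment_1 K : 4 * INR K ^ 2 * cos_moment K 1 = 1 - (-1) ^ K.
Proof.
assert (H1 := cos_moment_by_parts K 1). assert (H0 := sin_moment_by_parts K 0).
simpl in H1, H0.
replace (4 * INR K ^ 2 * cos_moment K 1)
  with (2 * INR K * (2 * INR K * cos_moment K 1)) by ring.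
rewrite <- H1. lra.
Qed.

Lemma cos_moment_SS K n :
  4 * INR K ^ 2 * cos_moment K (S (S n))
  = INR (S (S n)) * ((PI / 2) ^ S n - INR (S n) * cos_moment K n).
Proof.
assert (H2 := cos_moment_by_parts K (S (S n))). assert (H1 := sin_moment_by_parts K (S n)).
simpl pred in H1, H2. rewrite pow_i, Rmult_0_l, Rminus_0_r in H1 by lia.
replace (4 * INR K ^ 2 * cos_moment K (S (S n)))
  with (2 * INR K * (2 * INR K * cos_moment K (S (S n)))) by ring.
rewrite <- H2, <- H1. ring.
Qed.

Lemma inner_term_0 K : inner_term 0 K = 0.
Proof.
unfold inner_term, delta_half. simpl. rewrite sum_n_m_zero by lia.
change (@zero R_AbelianMonoid) with 0. unfold Rdiv. ring.
Qed.

Lemma inner_term_1 K : (0 < K)%nat -> inner_term 1 K = ((-1) ^ K - 1) / (PI * INR K ^ 2).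
Proof.
intros HK. assert (HK' : INR K <> 0) by (apply not_0_INR; lia).
assert (HPI := PI_neq0).
unfold inner_term, delta_half. simpl. rewrite sum_n_n. simpl. field. auto.
Qed.

Definition inner_summand (n K j : nat) : R :=
  (-1) ^ j / (PI ^ (2 * j - 1) * INR K ^ (2 * j) * INR (fact (n + 1 - 2 * j))).

Lemma inner_summand_SS n K j : (0 < K)%nat -> (1 <= j)%nat ->
  inner_summand (S (S n)) K (S j) = - / (PI ^ 2 * INR K ^ 2) * inner_summand n K j.
Proof.
intros HK Hj. assert (HK' : INR K <> 0) by (apply not_0_INR; lia).
assert (HPI := PI_neq0).
assert (INR (fact (n + 1 - 2 * j)) <> 0) by apply INR_fact_neq_0.
unfold inner_summand.
replace (S (S n) + 1 - 2 * S j)%nat with (n + 1 - 2 * j)%nat by lia.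
replace (2 * S j - 1)%nat with (2 * j - 1 + 2)%nat by lia.
replace (2 * S j)%nat with (2 * j + 2)%nat by lia.
rewrite !pow_add. simpl pow.
field. repeat split; auto; apply pow_nonzero; auto.
Qed.

Lemma inner_term_SS n K : (0 < K)%nat ->
  inner_term (S (S n)) K
  = - / (PI * INR K ^ 2 * INR (fact (S n))) - inner_term n K / (PI ^ 2 * INR K ^ 2).
Proof.
intros HK. assert (HK' : INR K <> 0) by (apply not_0_INR; lia).
assert (HPI := PI_neq0).
assert (INR (fact (S n)) <> 0) by apply INR_fact_neq_0.
unfold inner_term. fold (inner_summand (S (S n)) K) (inner_summand n K).
replace (Nat.div2 (S (S n) + 1)) with (S (Nat.div2 (n + 1)))
  by now replace (S (S n) + 1)%nat with (S (S (n + 1))) by lia.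
replace (delta_half (S (S n))) with (delta_half n)
  by (unfold delta_half; now replace (S (S n) + 1)%nat with (S (S (n + 1))) by lia).
rewrite sum_Sn_m, <- sum_n_m_S by apply le_n_S, Nat.le_0_l.
rewrite (sum_n_m_ext_loc _ (fun j => mult (- / (PI ^ 2 * INR K ^ 2)) (inner_summand n K j)))
  by (intros j Hj; apply inner_summand_SS; lia).
rewrite sum_n_m_mult_l.
change (plus ?x ?y) with (x + y). change (mult ?x ?y) with (x * y).
unfold inner_summand at 1.
replace (S (S n) + 1 - 2 * 1)%nat with (S n) by lia.
replace (S (S n) + 1)%nat with (S (S (n + 1))) by lia.
(* [sum_n_m_mult_l] returns the sum over the ring's monoid; identify it with the original. *)
change (@sum_n_m (Ring.AbelianMonoid R_Ring)) with (@sum_n_m R_AbelianMonoid).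
set (s := sum_n_m (inner_summand n K) 1 (Nat.div2 (n + 1))).
simpl pow. field. repeat split; auto; apply pow_nonzero; auto.
Qed.

Lemma cos_moment_closed K n : (0 < K)%nat ->
  cos_moment K n = - (PI / 2) ^ n * INR (fact n) * inner_term n K / 2.
Proof.
intros HK. assert (HK' : INR K <> 0) by (apply not_0_INR; lia).
assert (HPI := PI_neq0).
cut (forall n, cos_moment K n = - (PI / 2) ^ n * INR (fact n) * inner_term n K / 2 /\
     cos_moment K (S n) = - (PI / 2) ^ S n * INR (fact (S n)) * inner_term (S n) K / 2);
  [intros H; exact (proj1 (H n))|].
clear n. induction n as [|n [IH0 IH1]]; split.
- rewrite cos_moment_0, inner_term_0 by assumption. lra.
- assert (H1 := cos_moment_1 K). rewrite inner_term_1, pow_1 by assumption.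
  change (INR (fact 1)) with 1.
  apply Rmult_eq_reg_l with (4 * INR K ^ 2); [rewrite H1; field; auto|].
  apply Rmult_integral_contrapositive; split; [lra | apply pow_nonzero; auto].
- exact IH1.
- assert (H2 := cos_moment_SS K n). rewrite IH0 in H2. rewrite inner_term_SS by assumption.
  apply Rmult_eq_reg_l with (4 * INR K ^ 2).
  2: { apply Rmult_integral_contrapositive; split; [lra | apply pow_nonzero; auto]. }
  rewrite H2. change (fact (S (S n))) with (S (S n) * (S n * fact n))%nat.
  change (fact (S n)) with (S n * fact n)%nat.
  rewrite !mult_INR, <- !tech_pow_Rmult.
  assert (INR (fact n) <> 0) by apply INR_fact_neq_0.
  assert (INR (S n) <> 0) by (apply not_0_INR; lia).
  set (I := inner_term n K) in *. set (P := (PI / 2) ^ n) in *.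
  field. auto.
Qed.

Lemma is_RInt_sum_f_R0 (h : nat -> R -> R) (I : nat -> R) (a b : R) (N : nat) :
  (forall k, is_RInt (h k) a b (I k)) ->
  is_RInt (fun x => sum_f_R0 (fun k => h k x) N) a b (sum_f_R0 I N).
Proof.
intros Hh. induction N as [|N IH]; [apply Hh|].
apply (is_RInt_plus (V := R_NormedModule)); [apply IH | apply Hh].
Qed.

Lemma is_RInt_pow (b : R) (n : nat) : is_RInt (fun x => x ^ n) 0 b (b ^ S n / INR (S n)).
Proof.
assert (HS : INR (S n) <> 0) by (apply not_0_INR; lia).
replace (b ^ S n / INR (S n)) with (b ^ S n / INR (S n) - 0 ^ S n / INR (S n))
  by (simpl; field; auto).
apply (is_RInt_derive (V := R_CompleteNormedModule) (fun x => x ^ S n / INR (S n))); intros x _.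
- auto_derive; auto. simpl pred. field. auto.
- apply (ex_derive_continuous (V := R_NormedModule)). auto_derive. auto.
Qed.

Lemma is_RInt_pow_mul_cos_poly (c : nat -> R) (N n : nat) :
  is_RInt (fun x => x ^ n * cos_poly c N (PI / 2 - x)) 0 (PI / 2)
    (c 0%nat * ((PI / 2) ^ S n / INR (S n))
     + 2 * sum_f_R0 (fun k => c (S k) * cos_moment (S k) n) N).
Proof.
assert (Hexpand : forall x, x ^ n * cos_poly c N (PI / 2 - x) = c 0%nat * x ^ n
          + 2 * sum_f_R0 (fun k => c (S k) * (x ^ n * cos (2 * INR (S k) * (PI / 2 - x)))) N).
{ intros x. unfold cos_poly.
  rewrite Rmult_plus_distr_l, (Rmult_comm (x ^ n) (c 0%nat)), <- Rmult_assoc,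
    (Rmult_comm (x ^ n) 2), Rmult_assoc, scal_sum.
  do 2 f_equal. apply sum_eq. intros k _. ring. }
apply (is_RInt_ext (fun x => c 0%nat * x ^ n
  + 2 * sum_f_R0 (fun k => c (S k) * (x ^ n * cos (2 * INR (S k) * (PI / 2 - x)))) N));
  [intros x _; symmetry; apply Hexpand|].
apply (is_RInt_plus (V := R_NormedModule)); apply (is_RInt_scal (V := R_NormedModule)).
- apply is_RInt_pow.
- apply is_RInt_sum_f_R0. intros k.
  apply (is_RInt_scal (V := R_NormedModule)), (RInt_correct (V := R_CompleteNormedModule)).
  apply (ex_RInt_continuous (V := R_CompleteNormedModule)). intros x _.
  apply (ex_derive_continuous (V := R_NormedModule)). auto_derive. auto.
Qed.

Lemma sum_cos_moment_binom (n m N : nat) :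
  2 * sum_f_R0 (fun k => binom (2 * m) (m + S k) * cos_moment (S k) n) N
  = - (PI / 2) ^ n * INR (fact n) * sum_f_R0 (fun k => summand n m (k + 1)) N.
Proof.
rewrite !scal_sum. apply sum_eq. intros k _.
rewrite cos_moment_closed by lia. unfold summand. rewrite Nat.add_1_r. field.
Qed.

Theorem theorem2 (n m : nat) :
  RInt (fun x => x ^ n * sin x ^ (2 * m)) 0 (PI / 2)
  = / 4 ^ m * (PI / 2) ^ n *
    (PI * binom (2 * m) m / (2 * INR (n + 1))
     - INR (Factorial.fact n) * Series (fun k : nat => summand n m (k + 1))).
Proof.
set (c := fun k => binom (2 * m) (m + k)).
assert (H4 : 4 ^ m <> 0) by (apply pow_nonzero; lra).
assert (Hfourier : forall x,
  / 4 ^ m * (x ^ n * cos_poly c m (PI / 2 - x)) = x ^ n * sin x ^ (2 * m)).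
{ intros x. unfold c. rewrite <- cos_pow_fourier, cos_shift by lia. field. auto. }
transitivity (/ 4 ^ m * (c 0%nat * ((PI / 2) ^ S n / INR (S n))
                         + 2 * sum_f_R0 (fun k => c (S k) * cos_moment (S k) n) m)).
- apply is_RInt_unique.
  apply (is_RInt_ext (fun x => / 4 ^ m * (x ^ n * cos_poly c m (PI / 2 - x))));
    [intros x _; apply Hfourier|].
  apply (is_RInt_scal (V := R_NormedModule)), is_RInt_pow_mul_cos_poly.
- (* The equation is typed at the carrier of [RInt]; [field] needs it at [R]. *)
  match goal with |- ?a = ?b => change (a = b :> R) end.
  unfold c. rewrite sum_cos_moment_binom, (Series_finite _ m).
  + rewrite Nat.add_0_r, Nat.add_1_r. assert (INR (S n) <> 0) by (apply not_0_INR; lia).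
    simpl pow. field. auto.
  + intros k Hk. unfold summand. rewrite binom_out by lia. ring.
Qed.
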